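(* Let $(A,\succ,\prec)$ be an anti-pre-Novikov algebra and $(V,l_{\succ},r_{\succ},l_{\prec},r_{\prec})$ a representation of it. Put $l_{\circ}=l_{\succ}+l_{\prec}$, $r_{\circ}=r_{\succ}+r_{\prec}$, $r_{\odot}=r_{\succ}+l_{\prec}$. Let $\hat A=A\oplus V^*$ with operations $(x+a^* )\succ(y+b^* )=x\succ y-(l_{\circ}^*+r_{\circ}^* )(x)b^*-r_{\succ}^*(y)a^*$ and $(x+a^* )\prec(y+b^* )=x\prec y+r_{\odot}^*(x)b^*+r_{\circ}^*(y)a^*$ ($x,y\in A$, $a^*,b^*\in V^*$); this is the semi-direct product anti-pre-Novikov algebra $A\ltimes V^*$ for the dual representation $(V^*,-(l_{\circ}^*+r_{\circ}^* ),-r_{\succ}^*,r_{\odot}^*,r_{\circ}^* )$. Let $T:V\to A$ be linear, identified with $\sum_{i}T(v_i)\otimes v_i^*\in\hat A\otimes\hat A$ for a basis $\{v_i\}$ of $V$ with dual basis $\{v_i^*\}$. Then $s=T-\tau(T)$ is a (skew-symmetric) solution of the anti-pre-Novikov Yang–Baxter equation in $\hat A$ if and only if $T$ is an $\mathcal O$-operator on $(A,\succ,\prec)$ associated to $(V,l_{\succ},r_{\succ},l_{\prec},r_{\prec})$.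
   Context: An anti-pre-Novikov algebra is $(A,\succ,\prec)$ such that with $x\circ y=x\succ y+x\prec y$: $(x\circ y-y\circ x)\succ z=y\succ(x\succ z)-x\succ(y\succ z)$; $x\prec(y\circ z)=(y\succ x)\prec z-(x\prec y)\prec z-y\succ(x\prec z)$; $(x\circ y)\succ z=-(x\succ z)\prec y$; $(x\prec y)\prec z=(x\prec z)\prec y$; $(x\circ y-y\circ x)\prec z=x\succ(y\circ z)-y\succ(x\circ z)$. A representation of it is $(V,l_{\succ},r_{\succ},l_{\prec},r_{\prec})$ ($V$ finite-dimensional, maps $A\to\mathrm{End}(V)$) such that, with $l_{\circ}=l_{\succ}+l_{\prec}$, $r_{\circ}=r_{\succ}+r_{\prec}$: $l_{\succ}(x\circ y-y\circ x)=l_{\succ}(y)l_{\succ}(x)-l_{\succ}(x)l_{\succ}(y)$; $r_{\prec}(x\circ y)=r_{\prec}(y)l_{\succ}(x)-r_{\prec}(y)r_{\prec}(x)-l_{\succ}(x)r_{\prec}(y)$; $l_{\succ}(x\circ y)=-r_{\prec}(y)l_{\succ}(x)$; $l_{\prec}(x\prec y)=r_{\prec}(y)l_{\prec}(x)$; $l_{\prec}(x\circ y-y\circ x)=l_{\succ}(x)l_{\circ}(y)-l_{\succ}(y)l_{\circ}(x)$; $r_{\succ}(x)(l_{\circ}(y)-r_{\circ}(y))=r_{\succ}(y\succ x)-l_{\succ}(y)r_{\succ}(x)$; $l_{\prec}(x)l_{\circ}(y)=l_{\prec}(y\succ x)-l_{\prec}(x\prec y)-l_{\succ}(y)l_{\prec}(x)$;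 $r_{\prec}(x)(l_{\circ}(y)-r_{\circ}(y))=l_{\succ}(y)r_{\circ}(x)-r_{\succ}(y\circ x)$; $r_{\succ}(x)l_{\circ}(y)=-l_{\prec}(y\succ x)$; $r_{\prec}(x)r_{\prec}(y)=r_{\prec}(y)r_{\prec}(x)$; $l_{\prec}(x)r_{\circ}(y)=r_{\prec}(y)r_{\succ}(x)-r_{\prec}(y)l_{\prec}(x)-r_{\succ}(x\prec y)$; $r_{\succ}(x)r_{\circ}(y)=-r_{\prec}(y)r_{\succ}(x)$. For $f:A\to\mathrm{End}(V)$, $\langle f^*(x)u^*,v\rangle=-\langle u^*,f(x)v\rangle$. $\tau$ is the flip of tensor factors. An $\mathcal O$-operator on $(A,\succ,\prec)$ associated to $(V,l_{\succ},r_{\succ},l_{\prec},r_{\prec})$ is a linear $T:V\to A$ with $T(u)\succ T(v)=T(l_{\succ}(T(u))v+r_{\succ}(T(v))u)$ and $T(u)\prec T(v)=T(l_{\prec}(T(u))v+r_{\prec}(T(v))u)$. For an anti-pre-Novikov algebra $B$ with $x\odot y=x\succ y+y\prec x$, $s=\sum_i a_i\otimes b_i\in B\otimes B$ solves the anti-pre-Novikov Yang–Baxter equation if $\sum_{i,j}a_i\circ a_j\otimes b_i\otimes b_j+\sum_{i,j}a_j\otimes a_i\otimes(b_i\odot b_j)+\sum_{i,j}a_i\otimes(b_i\prec a_j)\otimes b_j=0$. *)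

From mathcomp Require Import all_boot all_algebra.
Set Implicit Arguments. Unset Strict Implicit. Unset Printing Implicit Defensive.
Import GRing.Theory.
Local Open Scope ring_scope.

Definition bilinear_op (K : fieldType) (A : lmodType K) (op : A -> A -> A) : Prop :=
  (forall x, linear (op x)) /\ (forall y, linear (fun x => op x y)).

Definition apn_circ (K : fieldType) (A : lmodType K) (succ prec : A -> A -> A)
  (x y : A) : A := succ x y + prec x y.

Definition apn_odot (K : fieldType) (A : lmodType K) (succ prec : A -> A -> A)
  (x y : A) : A := succ x y + prec y x.

Definition is_antiPreNovikov (K : fieldType) (A : lmodType K) (succ prec : A -> A -> A)
  : Prop :=
  let circ := apn_circ succ prec in
  [/\ bilinear_op succ, bilinear_op prec,
   forall x y z, succ (circ x y - circ y x) z = succ y (succ x z) - succ x (succ y z),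
   forall x y z, prec x (circ y z) = prec (succ y x) z - prec (prec x y) z - succ y (prec x z)
  & [/\ forall x y z, succ (circ x y) z = - prec (succ x z) y,
     (forall x y z, prec (prec x y) z = prec (prec x z) y)
     & (forall x y z, prec (circ x y - circ y x) z = succ x (circ y z) - succ y (circ x z))]].

Definition is_apn_rep (K : fieldType) (A V : vectType K) (succ prec : A -> A -> A)
  (ls rs lp rp : A -> 'End(V)) : Prop :=
  let circ := apn_circ succ prec in
  let lc := fun x => ls x + lp x in
  let rc := fun x => rs x + rp x in
  [/\ [/\ linear ls, linear rs, linear lp & linear rp],
   [/\ forall x y, ls (circ x y - circ y x) = (ls y \o ls x)%VF - (ls x \o ls y)%VF,
       forall x y, rp (circ x y) = (rp y \o ls x)%VF - (rp y \o rp x)%VF - (ls x \o rp y)%VF,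
       forall x y, ls (circ x y) = - (rp y \o ls x)%VF
     & forall x y, lp (prec x y) = (rp y \o lp x)%VF],
   [/\ forall x y, lp (circ x y - circ y x) = (ls x \o lc y)%VF - (ls y \o lc x)%VF,
       forall x y, (rs x \o (lc y - rc y))%VF = rs (succ y x) - (ls y \o rs x)%VF,
       forall x y, (lp x \o lc y)%VF = lp (succ y x) - lp (prec x y) - (ls y \o lp x)%VF
     & forall x y, (rp x \o (lc y - rc y))%VF = (ls y \o rc x)%VF - rs (circ y x)]
  & [/\ forall x y, (rs x \o lc y)%VF = - lp (succ y x),
        forall x y, (rp x \o rp y)%VF = (rp y \o rp x)%VF,
        forall x y, (lp x \o rc y)%VF = (rp y \o rs x)%VF - (rp y \o lp x)%VF - rs (prec x y)
      & forall x y, (rs x \o rc y)%VF = - (rp y \o rs x)%VF]].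

(* V^* := 'Hom(V, K^o);  <f^*(x) u^*, v> = - <u^*, f(x) v>, i.e. f^*(x) u^* = - u^* o f(x) *)
Definition dualV (K : fieldType) (V : vectType K) := 'Hom(V, K^o).

Definition dual_act (K : fieldType) (A V : vectType K) (f : A -> 'End(V)) (x : A)
  (u : dualV V) : dualV V := - (u \o f x)%VF.

Definition Ahat (K : fieldType) (A V : vectType K) := (A * dualV V)%type.

Definition hat_succ (K : fieldType) (A V : vectType K) (succ : A -> A -> A)
  (ls rs lp rp : A -> 'End(V)) (X Y : Ahat A V) : Ahat A V :=
  let lcrc := fun x => ls x + lp x + (rs x + rp x) in
  (succ X.1 Y.1, - dual_act lcrc X.1 Y.2 - dual_act rs Y.1 X.2).

Definition hat_prec (K : fieldType) (A V : vectType K) (prec : A -> A -> A)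
  (ls rs lp rp : A -> 'End(V)) (X Y : Ahat A V) : Ahat A V :=
  let rodot := fun x => rs x + lp x in
  let rc := fun x => rs x + rp x in
  (prec X.1 Y.1, dual_act rodot X.1 Y.2 + dual_act rc Y.1 X.2).

(* An element of B (x) B (x) B (B finite-dimensional) is identified with the
   trilinear form it induces on B^* x B^* x B^*; thus a finite sum
   sum_k a_k (x) b_k (x) c_k is zero iff sum_k f(a_k) g(b_k) h(c_k) = 0 for all
   linear functionals f, g, h on B.  A 2-tensor s = sum_i a_i (x) b_i is given
   by the list of pairs (a_i, b_i). *)
Definition APN_YBE (K : fieldType) (B : vectType K) (succ prec : B -> B -> B)
  (s : seq (B * B)) : Prop :=
  forall f g h : 'Hom(B, K^o),
    \sum_(p <- s) \sum_(q <- s)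
      ((f (apn_circ succ prec p.1 q.1) : K) * g p.2 * h q.2
       + (f q.1 : K) * g p.1 * h (apn_odot succ prec p.2 q.2)
       + (f p.1 : K) * g (prec p.2 q.1) * h q.2) = 0.

Definition is_O_operator (K : fieldType) (A V : vectType K) (succ prec : A -> A -> A)
  (ls rs lp rp : A -> 'End(V)) (T : 'Hom(V, A)) : Prop :=
  (forall u v, succ (T u) (T v) = T (ls (T u) v + rs (T v) u))
  /\ (forall u v, prec (T u) (T v) = T (lp (T u) v + rp (T v) u)).

Definition dual_basis (K : fieldType) (V : vectType K) (n : nat) (e : n.-tuple V)
  (i : 'I_n) : dualV V := linfun (coord e i : V -> K^o).

(* T viewed as sum_i T(v_i) (x) v_i^* in Ahat (x) Ahat, and s = T - tau(T) *)
Definition T_tensor (K : fieldType) (A V : vectType K) (T : 'Hom(V, A)) (n : nat)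
  (e : n.-tuple V) : seq (Ahat A V * Ahat A V) :=
  [seq ((T (tnth e i), 0), (0, dual_basis e i)) | i <- enum 'I_n].

Definition skew_T (K : fieldType) (A V : vectType K) (T : 'Hom(V, A)) (n : nat)
  (e : n.-tuple V) : seq (Ahat A V * Ahat A V) :=
  T_tensor T e ++ [seq (- p.2, p.1) | p <- T_tensor T e].

(* A linear form f on A ⋉ V^* splits as f (x, b) = φ_f(x) + b(u_f) with φ_f = [hom_A f]
   in A^* and u_f = [vec_V e f] in V, and every pair (φ, u) arises.  Evaluate the
   Yang–Baxter tensor of s = T - τ(T) on f ⊗ g ⊗ h, writing T = Σ_i T(e_i) ⊗ e_i^*:
   using the multiplication table of A ⋉ V^*, each double sum over the basis contracts
   through Σ_i e_i^*(u) T(e_i) = T(u), leaving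
     φ_f(D≻(u_g,u_h) + D≺(u_g,u_h)) - φ_g(D≺(u_f,u_h)) + φ_h(D≻(u_g,u_f) + D≺(u_f,u_g)),
   where D≻(u,v) = Tu ≻ Tv - T(l≻(Tu)v + r≻(Tv)u) and D≺(u,v) = Tu ≺ Tv - T(l≺(Tu)v + r≺(Tv)u)
   are the defects of the two O-operator identities.  Taking for f, g, h forms that see
   only A or only V^* isolates each defect.  Only the bilinearity of ≻, ≺ and the
   linearity of l≻, r≻, l≺, r≺ enter. *)

From HB Require Import structures.
From mathcomp Require Import all_boot all_algebra ring.
Set Implicit Arguments. Unset Strict Implicit. Unset Printing Implicit Defensive.
Import GRing.Theory.
Local Open Scope ring_scope.

Section PropLinear.
Variables (K : fieldType) (U W : lmodType K) (f : U -> W).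
Hypothesis f_lin : linear f.
Let F : {linear U -> W} := HB.pack f (GRing.isLinear.Build K U W *:%R f f_lin).

Lemma lin0 : f 0 = 0. Proof. exact: (linear0 F). Qed.
Lemma linD x y : f (x + y) = f x + f y. Proof. exact: (linearD F). Qed.
Lemma linN x : f (- x) = - f x. Proof. exact: (linearN F). Qed.
Lemma linZ a x : f (a *: x) = a *: f x. Proof. exact: (linearZ_LR F). Qed.
Lemma lin_sum I (r : seq I) (P : pred I) (G : I -> U) :
  f (\sum_(i <- r | P i) G i) = \sum_(i <- r | P i) f (G i).
Proof. exact: (linear_sum F). Qed.
End PropLinear.

Lemma linear_lfun (K : fieldType) (U W : vectType K) (f : U -> W) :
  linear f -> exists F : 'Hom(U, W), F =1 f.
Proof.
move=> f_lin; pose F : {linear U -> W} := HB.pack f (GRing.isLinear.Build K U W *:%R f f_lin).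
by exists (linfun F) => u; rewrite lfunE.
Qed.

Lemma lfun_separate (K : fieldType) (A : vectType K) (w : A) :
  (forall phi : 'Hom(A, K^o), phi w = 0) -> w = 0.
Proof.
move=> w0; rewrite (coord_vbasis (memvf w)); apply: big1 => i _.
by have := w0 (linfun (coord (vbasis fullv) i : A -> K^o)); rewrite lfunE => ->; rewrite scale0r.
Qed.

Section Bilinear.
Variables (K : fieldType) (U W : lmodType K) (op : U -> U -> W).
Hypothesis op_linl : forall y, linear (op^~ y).
Lemma bil0l y : op 0 y = 0. Proof. exact: (lin0 (op_linl y)). Qed.
Lemma bilZl a x y : op (a *: x) y = a *: op x y. Proof. exact: (linZ (op_linl y)). Qed.
Lemma bil_suml I (r : seq I) (P : pred I) (G : I -> U) y :
  op (\sum_(i <- r | P i) G i) y = \sum_(i <- r | P i) op (G i) y.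
Proof. exact: (lin_sum (op_linl y)). Qed.
End Bilinear.

Section DualCoordinates.
Variables (K : fieldType) (A V : vectType K).
Variables (e : (\dim (fullv : {vspace V})).-tuple V) (he : basis_of fullv e).

Lemma coord_tnth_basis v : v = \sum_i coord e i v *: tnth e i.
Proof.
by rewrite {1}(coord_basis he (memvf v)); apply: eq_bigr => i _; rewrite (tnth_nth 0).
Qed.

Lemma dual_basis_expand (b : dualV V) : b = \sum_i b (tnth e i) *: dual_basis e i.
Proof.
apply/lfunP => v; rewrite sum_lfunE {1}(coord_tnth_basis v) linear_sum.
by apply: eq_bigr => i _; rewrite linearZ scale_lfunE lfunE; apply: mulrC.
Qed.

Lemma dual_basisE i v : dual_basis e i v = coord e i v.
Proof. by rewrite lfunE. Qed.

Definition hom_A (f : 'Hom(Ahat A V, K^o)) (x : A) : K := f (x, 0).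
Definition vec_V (f : 'Hom(Ahat A V, K^o)) : V :=
  \sum_i f (0, dual_basis e i) *: tnth e i.

Lemma hom_A_linear (f : 'Hom(Ahat A V, K^o)) : linear (hom_A f : A -> K^o).
Proof.
move=> k x y; rewrite /hom_A -linearP /=.
suff -> : (k *: x + y, 0) = (k *: x + y, k *: 0 + 0) :> Ahat A V by [].
by rewrite scaler0 addr0.
Qed.

Lemma hom_A0 (f : 'Hom(Ahat A V, K^o)) : hom_A f 0 = 0.
Proof. exact: (lin0 (hom_A_linear f)). Qed.

Lemma hom_AD (f : 'Hom(Ahat A V, K^o)) x y : hom_A f (x + y) = hom_A f x + hom_A f y.
Proof. exact: (linD (hom_A_linear f)). Qed.

Lemma hom_AN (f : 'Hom(Ahat A V, K^o)) x : hom_A f (- x) = - hom_A f x.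
Proof. exact: (linN (hom_A_linear f)). Qed.

Lemma hom_dualE (f : 'Hom(Ahat A V, K^o)) b : f (0, b) = b (vec_V f).
Proof.
have -> : (0, b) = \sum_i b (tnth e i) *: ((0 : A), dual_basis e i).
  rewrite [RHS]surjective_pairing !raddf_sum /= -dual_basis_expand.
  by congr (_, _); rewrite big1 // => i _; rewrite scaler0.
rewrite linear_sum /vec_V linear_sum; apply: eq_bigr => i _.
by rewrite !linearZ /=; apply: mulrC.
Qed.

Lemma hom_AhatE (f : 'Hom(Ahat A V, K^o)) p : f p = hom_A f p.1 + p.2 (vec_V f).
Proof.
case: p => x b; rewrite /hom_A -hom_dualE /=.
rewrite -[in f (x, b)](addr0 x) -[in f (x + 0, b)](add0r b).
exact: (linearD f (x, 0) (0, b)).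
Qed.

Lemma exists_hom_Ahat (phi : 'Hom(A, K^o)) u :
  exists F : 'Hom(Ahat A V, K^o), hom_A F =1 phi /\ vec_V F = u.
Proof.
have [F FE] : exists F : 'Hom(Ahat A V, K^o), F =1 fun p => phi p.1 + p.2 u.
  apply: linear_lfun => k p q /=.
  by rewrite linearP add_lfunE scale_lfunE scalerDr addrACA.
exists F; split=> [y | ]; first by rewrite /hom_A FE zero_lfunE addr0.
rewrite [RHS](coord_tnth_basis u); apply: eq_bigr => i _.
by rewrite FE linear0 add0r dual_basisE.
Qed.
End DualCoordinates.

Section Defects.
Variables (K : fieldType) (A V : vectType K) (succ prec : A -> A -> A).
Variables (ls rs lp rp : A -> 'End(V)) (T : 'Hom(V, A)).
Variables (e : (\dim (fullv : {vspace V})).-tuple V) (he : basis_of fullv e).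

Definition succ_defect u v := succ (T u) (T v) - T (ls (T u) v + rs (T v) u).
Definition prec_defect u v := prec (T u) (T v) - T (lp (T u) v + rp (T v) u).

Lemma O_operatorP : is_O_operator succ prec ls rs lp rp T <->
  (forall u v, succ_defect u v = 0) /\ (forall u v, prec_defect u v = 0).
Proof.
split=> [[Hs Hp] | [Hs Hp]]; split=> u v.
- by rewrite /succ_defect Hs subrr.
- by rewrite /prec_defect Hp subrr.
- by apply/eqP; rewrite -subr_eq0; apply/eqP; apply: Hs.
- by apply/eqP; rewrite -subr_eq0; apply/eqP; apply: Hp.
Qed.

Local Notation Ds := succ_defect.
Local Notation Dp := prec_defect.

Definition defect_form (f g h : 'Hom(Ahat A V, K^o)) : K :=
  let: (uf, ug, uh) := (vec_V e f, vec_V e g, vec_V e h) in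
  hom_A f (Ds ug uh + Dp ug uh) - hom_A g (Dp uf uh) + hom_A h (Ds ug uf + Dp uf ug).

Lemma defect_form_eq0P : (forall f g h, defect_form f g h = 0) <->
  (forall u v, Ds u v = 0) /\ (forall u v, Dp u v = 0).
Proof.
rewrite /defect_form; split=> [form0 | [Ds0 Dp0] f g h]; last first.
  by rewrite !Ds0 !Dp0 !addr0 !hom_A0 subr0 addr0.
have realize phi u := exists_hom_Ahat (A := A) he phi u.
have form0_at u v (phi : 'Hom(A, K^o)) : phi (Ds u v + Dp u v) = 0 /\ phi (Dp u v) = 0.
  have [[[Fu [FuA FuV]] [Fv [FvA FvV]]] [G [GA GV]]] := (realize 0 u, realize 0 v, realize phi 0).
  have := form0 Fu G Fv; have := form0 G Fu Fv.
  rewrite !(FuA, FvA, GA, FuV, FvV, zero_lfunE) subr0 sub0r !addr0 => ->.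
  by move/eqP; rewrite oppr_eq0 => /eqP.
have Dp0 u v : Dp u v = 0 by apply: lfun_separate => phi; case: (form0_at u v phi).
split=> // u v; apply: lfun_separate => phi.
by have [+ _] := form0_at u v phi; rewrite Dp0 addr0.
Qed.
End Defects.

Section SemidirectProduct.
Variables (K : fieldType) (A V : vectType K) (succ prec : A -> A -> A).
Variables (ls rs lp rp : A -> 'End(V)).
Local Notation hsucc := (hat_succ succ ls rs lp rp).
Local Notation hprec := (hat_prec prec ls rs lp rp).

Ltac lfun_ring := apply/lfunP => v;
  rewrite ?(add_lfunE, opp_lfunE, comp_lfunE, linearD, linearN) /=; ring.

Lemma hat_precE x a y b : hprec (x, a) (y, b) =
  (prec x y, - (b \o (rs x + lp x))%VF - (a \o (rs y + rp y))%VF).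
Proof. by []. Qed.

Lemma hat_circE x a y b : apn_circ hsucc hprec (x, a) (y, b) =
  (apn_circ succ prec x y, (b \o (ls x + rp x))%VF - (a \o rp y)%VF).
Proof. apply: (congr2 pair) => //=; rewrite /dual_act; lfun_ring. Qed.

Lemma hat_odotE x a y b : apn_odot hsucc hprec (x, a) (y, b) =
  (apn_odot succ prec x y, (b \o (ls x + lp x))%VF - (a \o lp y)%VF).
Proof. apply: (congr2 pair) => //=; rewrite /dual_act; lfun_ring. Qed.
End SemidirectProduct.

Section SkewTensor.
Variables (K : fieldType) (A V : vectType K) (T : 'Hom(V, A)).
Variables (e : (\dim (fullv : {vspace V})).-tuple V).

Definition T_term i : Ahat A V * Ahat A V := ((T (tnth e i), 0), (0, dual_basis e i)).
(* The i-th summand of [- tau(T)], sign included, as listed in [skew_T]. *)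
Definition tauT_term i : Ahat A V * Ahat A V := ((0, - dual_basis e i), (T (tnth e i), 0)).

Lemma sum_skew_T (R : nmodType) (F : Ahat A V * Ahat A V -> R) :
  \sum_(p <- skew_T T e) F p = \sum_i (F (T_term i) + F (tauT_term i)).
Proof.
rewrite big_cat /= -map_comp !big_map big_split /= [index_enum _]unlock.
congr (_ + _); apply: eq_bigr => i _; congr (F (_, _)).
by apply: (congr2 pair); rewrite ?oppr0.
Qed.

Lemma sum2_skew_T (R : nmodType) (F : Ahat A V * Ahat A V -> Ahat A V * Ahat A V -> R) :
  \sum_(p <- skew_T T e) \sum_(q <- skew_T T e) F p q =
  \sum_i \sum_j (F (T_term i) (T_term j) + F (T_term i) (tauT_term j)
                 + F (tauT_term i) (T_term j) + F (tauT_term i) (tauT_term j)).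
Proof.
rewrite sum_skew_T; apply: eq_bigr => i _; rewrite !sum_skew_T -big_split /=.
by apply: eq_bigr => j _; rewrite !addrA.
Qed.
End SkewTensor.

Section Contraction.
Variables (K : fieldType) (A V : vectType K) (T : 'Hom(V, A)).
Variables (e : (\dim (fullv : {vspace V})).-tuple V) (he : basis_of fullv e).
Variables (phi : A -> K^o) (phi_lin : linear phi).

Local Notation x i := (T (tnth e i)).
Local Notation c i u := (coord e i u).

Let phiZ k y : phi (k *: y) = k * phi y := linZ phi_lin k y.

Lemma T_coordE u : T u = \sum_i c i u *: x i.
Proof.
by rewrite {1}(coord_tnth_basis he u) linear_sum; apply: eq_bigr => i _; rewrite linearZ.
Qed.

Lemma contract_op (op : A -> A -> A) (op_bil : bilinear_op op) u v :
  \sum_i \sum_j phi (op (x i) (x j)) * (c i u * c j v) = phi (op (T u) (T v)).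
Proof.
rewrite (T_coordE u) (bil_suml op_bil.2) (lin_sum phi_lin); apply: eq_bigr => i _.
rewrite (bilZl op_bil.2) phiZ (T_coordE v) (lin_sum (op_bil.1 _)).
rewrite (lin_sum phi_lin) big_distrr; apply: eq_bigr => j _.
by rewrite (linZ (op_bil.1 _)) phiZ /=; ring.
Qed.

Lemma contract_op_swap (op : A -> A -> A) (op_bil : bilinear_op op) u v :
  \sum_i \sum_j phi (op (x j) (x i)) * (c i u * c j v) = phi (op (T v) (T u)).
Proof.
rewrite exchange_big -contract_op //.
by apply: eq_bigr => j _; apply: eq_bigr => i _; rewrite [c j v * _]mulrC.
Qed.

Lemma contract_T w : \sum_j phi (x j) * c j w = phi (T w).
Proof.
by rewrite (T_coordE w) (lin_sum phi_lin); apply: eq_bigr => j _; rewrite phiZ mulrC.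
Qed.

Lemma contract_act (L : A -> 'End(V)) (L_lin : linear L) u v :
  \sum_i \sum_j phi (x j) * (c i u * c j (L (x i) v)) = phi (T (L (T u) v)).
Proof.
transitivity (\sum_i c i u * phi (T (L (x i) v))).
  apply: eq_bigr => i _; rewrite -contract_T big_distrr /=.
  by apply: eq_bigr => j _; rewrite mulrCA.
rewrite (T_coordE u) (lin_sum L_lin) sum_lfunE linear_sum (lin_sum phi_lin).
by apply: eq_bigr => i _; rewrite (linZ L_lin) scale_lfunE linearZ phiZ.
Qed.

Lemma contract_act_swap (L : A -> 'End(V)) (L_lin : linear L) u v :
  \sum_i \sum_j phi (x i) * (c j v * c i (L (x j) u)) = phi (T (L (T v) u)).
Proof. by rewrite exchange_big -contract_act. Qed.
End Contraction.

Definition ybe_summand (K : fieldType) (B : vectType K) (succ prec : B -> B -> B)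
    (f g h : 'Hom(B, K^o)) (p q : B * B) :=
  (f (apn_circ succ prec p.1 q.1) : K) * g p.2 * h q.2
  + (f q.1 : K) * g p.1 * h (apn_odot succ prec p.2 q.2)
  + (f p.1 : K) * g (prec p.2 q.1) * h q.2.

Lemma APN_YBE_sumE (K : fieldType) (B : vectType K) (succ prec : B -> B -> B) s :
  APN_YBE succ prec s <->
  forall f g h, \sum_(p <- s) \sum_(q <- s) ybe_summand succ prec f g h p q = 0.
Proof. by []. Qed.

Section YBEComputation.
Variables (K : fieldType) (A V : vectType K) (succ prec : A -> A -> A).
Variables (ls rs lp rp : A -> 'End(V)).
Hypotheses (succ_bil : bilinear_op succ) (prec_bil : bilinear_op prec).
Hypotheses (ls_lin : linear ls) (rs_lin : linear rs) (lp_lin : linear lp) (rp_lin : linear rp).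
Variables (T : 'Hom(V, A)) (e : (\dim (fullv : {vspace V})).-tuple V) (he : basis_of fullv e).
Variables (f g h : 'Hom(Ahat A V, K^o)).

Local Notation x i := (T (tnth e i)).
Local Notation c i u := (coord e i u).
Local Notation uf := (vec_V e f).
Local Notation ug := (vec_V e g).
Local Notation uh := (vec_V e h).
Local Notation Y := (ybe_summand (hat_succ succ ls rs lp rp) (hat_prec prec ls rs lp rp) f g h).

Ltac ybe_expand :=
  rewrite /ybe_summand /= ?(hat_circE, hat_odotE, hat_precE) !(hom_AhatE he) /apn_circ /apn_odot /=;
  rewrite ?(add_lfunE, opp_lfunE, comp_lfunE, dual_basisE);
  rewrite ?(bil0l succ_bil.2, bil0l prec_bil.2, lin0 (succ_bil.1 _), lin0 (prec_bil.1 _));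
  rewrite ?(lin0 ls_lin, lin0 rs_lin, lin0 lp_lin, lin0 rp_lin, zero_lfunE, hom_A0);
  rewrite ?(linear0 (coord e _), linearD (coord e _), hom_AD, hom_A0).

Lemma ybe_summand_T_T i j : Y (T_term T e i) (T_term T e j) =
  hom_A f (succ (x i) (x j)) * (c i ug * c j uh) + hom_A f (prec (x i) (x j)) * (c i ug * c j uh)
  - hom_A f (x i) * (c j uh * c i (rs (x j) ug)) - hom_A f (x i) * (c j uh * c i (rp (x j) ug)).
Proof. by rewrite /T_term; ybe_expand; ring. Qed.

Lemma ybe_summand_T_tauT i j : Y (T_term T e i) (tauT_term T e j) =
  hom_A g (x i) * (c j uf * c i (lp (x j) uh))
  - hom_A h (x j) * (c i ug * c j (ls (x i) uf)) - hom_A h (x j) * (c i ug * c j (rp (x i) uf)).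
Proof. by rewrite /T_term /tauT_term; ybe_expand; ring. Qed.

Lemma ybe_summand_tauT_T i j : Y (tauT_term T e i) (T_term T e j) =
  hom_A g (x i) * (c j uh * c i (rp (x j) uf))
  - hom_A f (x j) * (c i ug * c j (ls (x i) uh)) - hom_A f (x j) * (c i ug * c j (lp (x i) uh))
  - hom_A g (prec (x i) (x j)) * (c i uf * c j uh).
Proof. by rewrite /T_term /tauT_term; ybe_expand; ring. Qed.

Lemma ybe_summand_tauT_tauT i j : Y (tauT_term T e i) (tauT_term T e j) =
  hom_A h (succ (x i) (x j)) * (c i ug * c j uf) + hom_A h (prec (x j) (x i)) * (c i ug * c j uf)
  - hom_A h (x j) * (c i uf * c j (rs (x i) ug)) - hom_A h (x j) * (c i uf * c j (lp (x i) ug)).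
Proof. by rewrite /tauT_term; ybe_expand; ring. Qed.

Lemma ybe_sum_skew_T :
  \sum_(p <- skew_T T e) \sum_(q <- skew_T T e) Y p q = defect_form succ prec ls rs lp rp T e f g h.
Proof.
rewrite sum2_skew_T.
under eq_bigr => i _ do under eq_bigr => j _ do
  rewrite ybe_summand_T_T ybe_summand_T_tauT ybe_summand_tauT_T ybe_summand_tauT_tauT.
under eq_bigr => i _ do rewrite !big_split /= !sumrN.
rewrite !big_split /= !sumrN.
rewrite !(contract_op T he (hom_A_linear _) succ_bil, contract_op T he (hom_A_linear _) prec_bil,
          contract_op_swap T he (hom_A_linear _) prec_bil).
rewrite !(contract_act T he (hom_A_linear _) ls_lin, contract_act T he (hom_A_linear _) rs_lin,
          contract_act T he (hom_A_linear _) lp_lin, contract_act T he (hom_A_linear _) rp_lin).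
rewrite !(contract_act_swap T he (hom_A_linear _) rs_lin,
          contract_act_swap T he (hom_A_linear _) lp_lin,
          contract_act_swap T he (hom_A_linear _) rp_lin).
rewrite /defect_form /succ_defect /prec_defect !(linearD T, hom_AD, hom_AN).
ring.
Qed.
End YBEComputation.

Theorem mainTheorem8 (K : fieldType) (A V : vectType K) (succ prec : A -> A -> A)
  (ls rs lp rp : A -> 'End(V))
  (HA : is_antiPreNovikov succ prec) (HV : is_apn_rep succ prec ls rs lp rp)
  (T : 'Hom(V, A)) (e : (\dim (fullv : {vspace V})).-tuple V) (he : basis_of fullv e) :
  APN_YBE (hat_succ succ ls rs lp rp) (hat_prec prec ls rs lp rp) (skew_T T e)
  <-> is_O_operator succ prec ls rs lp rp T.
Proof.
case: HA => succ_bil prec_bil _ _ _; case: HV => [[ls_lin rs_lin lp_lin rp_lin] _ _ _].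
have ybeE := ybe_sum_skew_T succ_bil prec_bil ls_lin rs_lin lp_lin rp_lin T he.
rewrite APN_YBE_sumE O_operatorP -(defect_form_eq0P succ prec ls rs lp rp T he).
by split=> ybe f g h; rewrite ?ybeE // -ybeE.
Qed.
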